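(* Assume $\gamma=0$, $L$ is conformal, and $s$ is not a root of unity. If $M$ is a simple $L$-module with $HM=M$ and $hM=0$, then $\operatorname{ann}M=\langle h\rangle$.
   Context: Let $r,s\in\mathbb C^\times$, $\phi\in\mathbb C[x]$, and $L=L(\phi,r,s,0)$ the associative $\mathbb C$-algebra generated by $u,d,h$ with $hu=ruh$, $dh=rhd$, $du-sud=\phi(h)$. $L$ is conformal if there is $\psi\in\mathbb C[x]$ with $s\psi(x)-\psi(rx)=\phi(x)$; fix such $\psi$ and set $H=ud+\psi(h)$, so $Hu=suH$, $dH=sHd$. Modules are left modules; $\langle\cdots\rangle$ denotes a two-sided ideal. *)

(* The ground field C is modelled by an arbitrary
   numClosedFieldType K (algebraically closed, characteristic 0). *)
From HB Require Import structures.
From mathcomp Require Import all_boot all_order all_algebra.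
Set Implicit Arguments. Unset Strict Implicit. Unset Printing Implicit Defensive.
Import Order.TTheory GRing.Theory Num.Theory.
Local Open Scope ring_scope.

(* Syntactic terms of the free associative K-algebra on u, d, h. *)
Inductive term (K : Type) : Type :=
  | Tu | Td | Th
  | Tc of K
  | Tadd of term K & term K
  | Tmul of term K & term K.
Arguments Tu {K}. Arguments Td {K}. Arguments Th {K}.

Section Terms.
Variable K : numClosedFieldType.

Definition tsub (a b : term K) : term K := Tadd a (Tmul (Tc (-1)) b).
Definition tpow (t : term K) (n : nat) : term K := iter n (Tmul t) (Tc 1).
Definition tpoly (p : {poly K}) : term K :=
  foldr (fun i acc => Tadd (Tmul (Tc p`_i) (tpow Th i)) acc) (Tc 0)
        (iota 0 (size p)).

(* defining relations of L = L(phi, r, s, 0) *)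
Definition rel_hu (r : K) : term K := tsub (Tmul Th Tu) (Tmul (Tc r) (Tmul Tu Th)).
Definition rel_dh (r : K) : term K := tsub (Tmul Td Th) (Tmul (Tc r) (Tmul Th Td)).
Definition rel_du (s : K) (phi : {poly K}) : term K :=
  tsub (tsub (Tmul Td Tu) (Tmul (Tc s) (Tmul Tu Td))) (tpoly phi).

(* Equality in L: congruence on terms generated by the axioms of an
   associative unital K-algebra and the defining relations of L. *)
Inductive eqvL (r s : K) (phi : {poly K}) : term K -> term K -> Prop :=
  | eqv_refl a : eqvL r s phi a a
  | eqv_sym a b : eqvL r s phi a b -> eqvL r s phi b a
  | eqv_trans a b c : eqvL r s phi a b -> eqvL r s phi b c -> eqvL r s phi a c
  | eqv_add a a' b b' : eqvL r s phi a a' -> eqvL r s phi b b' ->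
      eqvL r s phi (Tadd a b) (Tadd a' b')
  | eqv_mul a a' b b' : eqvL r s phi a a' -> eqvL r s phi b b' ->
      eqvL r s phi (Tmul a b) (Tmul a' b')
  | eqv_addA a b c : eqvL r s phi (Tadd a (Tadd b c)) (Tadd (Tadd a b) c)
  | eqv_addC a b : eqvL r s phi (Tadd a b) (Tadd b a)
  | eqv_add0 a : eqvL r s phi (Tadd (Tc 0) a) a
  | eqv_addN a : eqvL r s phi (tsub a a) (Tc 0)
  | eqv_mulA a b c : eqvL r s phi (Tmul a (Tmul b c)) (Tmul (Tmul a b) c)
  | eqv_mul1l a : eqvL r s phi (Tmul (Tc 1) a) a
  | eqv_mul1r a : eqvL r s phi (Tmul a (Tc 1)) a
  | eqv_mul0l a : eqvL r s phi (Tmul (Tc 0) a) (Tc 0)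
  | eqv_mulDl a b c : eqvL r s phi (Tmul (Tadd a b) c) (Tadd (Tmul a c) (Tmul b c))
  | eqv_mulDr a b c : eqvL r s phi (Tmul a (Tadd b c)) (Tadd (Tmul a b) (Tmul a c))
  | eqv_cadd x y : eqvL r s phi (Tadd (Tc x) (Tc y)) (Tc (x + y))
  | eqv_cmul x y : eqvL r s phi (Tmul (Tc x) (Tc y)) (Tc (x * y))
  | eqv_ccomm x a : eqvL r s phi (Tmul (Tc x) a) (Tmul a (Tc x))
  | eqv_rel_hu : eqvL r s phi (rel_hu r) (Tc 0)
  | eqv_rel_dh : eqvL r s phi (rel_dh r) (Tc 0)
  | eqv_rel_du : eqvL r s phi (rel_du s phi) (Tc 0).

Definition in_ideal_h (r s : K) (phi : {poly K}) (t : term K) : Prop :=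
  exists l : seq (term K * term K),
    eqvL r s phi t
      (foldr (fun p acc => Tadd (Tmul (Tmul p.1 Th) p.2) acc) (Tc 0) l).

Definition conformal_poly (r s : K) (phi psi : {poly K}) : Prop :=
  s *: psi - psi \Po (r *: 'X) = phi.

Definition Hterm (psi : {poly K}) : term K := Tadd (Tmul Tu Td) (tpoly psi).

Section Module.
Variable M : lmodType K.
Variables (U D H : M -> M).

Fixpoint act (t : term K) (m : M) : M :=
  match t with
  | Tu => U m | Td => D m | Th => H m
  | Tc c => c *: m
  | Tadd a b => act a m + act b m
  | Tmul a b => act a (act b m)
  end.

Definition is_Lmodule (r s : K) (phi : {poly K}) : Prop :=
  [/\ (linear U /\ linear D /\ linear H),
      (forall m, act (rel_hu r) m = 0),
      (forall m, act (rel_dh r) m = 0) &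
      (forall m, act (rel_du s phi) m = 0)].

Definition is_submodule (P : M -> Prop) : Prop :=
  [/\ P 0, (forall m n, P m -> P n -> P (m + n)) /\
      (forall (c : K) m, P m -> P (c *: m)),
      (forall m, P m -> P (U m)), (forall m, P m -> P (D m)) &
      (forall m, P m -> P (H m))].

Definition is_simple : Prop :=
  (exists m : M, m <> 0) /\
  forall P, is_submodule P -> (forall m, P m -> m = 0) \/ (forall m, P m).

Definition in_ann (t : term K) : Prop := forall m, act t m = 0.

End Module.
End Terms.

From HB Require Import structures.
From mathcomp Require Import all_boot all_order all_algebra.
From Stdlib Require Import Setoid Morphisms Classical.
Set Implicit Arguments. Unset Strict Implicit. Unset Printing Implicit Defensive.
Import Order.TTheory GRing.Theory Num.Theory.
Local Open Scope ring_scope.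

(* Modulo <h> the defining relations of L collapse to du = s ud + phi(0), so every
   element of L is congruent to a combination of the monomials u^i d^j; since h
   acts by 0, <h> lies in ann M and it remains to show that the operators u^i d^j
   are linearly independent on M.  There H acts as Hop = ud + psi(0), which is onto
   by hypothesis and one-to-one because its kernel is a submodule.  From
   Hop u = s u Hop and d Hop = s Hop d, conjugation by Hop multiplies u^i d^j by
   s^(i-j); as s is not a root of unity this separates the classes i - j = k, and
   inside a class u^n d^n = g_n(Hop) with deg g_n = n.  A relation would thus give
   a nonzero polynomial P with P(Hop) = 0 on M.  Then Hop has an eigenvector v;
   the u-chain and the d-chain through v consist of eigenvectors for s^a l and
   s^-a l, both must end, and their ends force s^(b+1) l = psi(0) = s^-b' l. *)

Section IdealCongruence.
Variable K : numClosedFieldType.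
Variables (r s : K) (phi : {poly K}).

Local Notation "a === b" := (eqvL r s phi a b) (at level 70).

#[global] Instance eqvL_Equivalence : Equivalence (eqvL r s phi).
Proof. by split; [exact: eqv_refl | exact: eqv_sym | exact: eqv_trans]. Qed.

#[global] Instance Tadd_eqvL :
  Proper (eqvL r s phi ==> eqvL r s phi ==> eqvL r s phi) (@Tadd K).
Proof. by move=> ? ? ? ? ? ?; apply: eqv_add. Qed.

#[global] Instance Tmul_eqvL :
  Proper (eqvL r s phi ==> eqvL r s phi ==> eqvL r s phi) (@Tmul K).
Proof. by move=> ? ? ? ? ? ?; apply: eqv_mul. Qed.

Lemma eqv_addr0 a : Tadd a (Tc 0) === a.
Proof. setoid_rewrite eqv_addC; exact: eqv_add0. Qed.

Lemma eqv_mul0r a : Tmul a (Tc 0) === Tc 0.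
Proof. setoid_rewrite <- eqv_ccomm; exact: eqv_mul0l. Qed.

Lemma eqv_mulcA c a b : Tmul a (Tmul (Tc c) b) === Tmul (Tc c) (Tmul a b).
Proof.
setoid_rewrite eqv_mulA; setoid_rewrite <- eqv_ccomm.
setoid_rewrite <- eqv_mulA; reflexivity.
Qed.

Lemma eqv_addACA a b c d :
  Tadd (Tadd a b) (Tadd c d) === Tadd (Tadd a c) (Tadd b d).
Proof.
setoid_rewrite <- eqv_addA; apply: eqv_add; first reflexivity.
setoid_rewrite eqv_addA; setoid_rewrite (eqv_addC _ _ _ b c).
setoid_rewrite <- eqv_addA; reflexivity.
Qed.

Definition hsum (l : seq (term K * term K)) : term K :=
  foldr (fun p acc => Tadd (Tmul (Tmul p.1 Th) p.2) acc) (Tc 0) l.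

Lemma hsum_cat l1 l2 : hsum (l1 ++ l2) === Tadd (hsum l1) (hsum l2).
Proof.
elim: l1 => [|x l1 IH] /=; first by setoid_rewrite eqv_add0; reflexivity.
by setoid_rewrite IH; setoid_rewrite eqv_addA; reflexivity.
Qed.

Lemma hsum_mull a l : Tmul a (hsum l) === hsum [seq (Tmul a p.1, p.2) | p <- l].
Proof.
elim: l => [|p l IH] /=; first exact: eqv_mul0r.
setoid_rewrite eqv_mulDr; setoid_rewrite IH.
by setoid_rewrite eqv_mulA; setoid_rewrite eqv_mulA; reflexivity.
Qed.

Lemma hsum_mulr b l : Tmul (hsum l) b === hsum [seq (p.1, Tmul p.2 b) | p <- l].
Proof.
elim: l => [|p l IH] /=; first exact: eqv_mul0l.
setoid_rewrite eqv_mulDl; setoid_rewrite IH.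
by setoid_rewrite <- (eqv_mulA _ _ _ (Tmul p.1 Th)); reflexivity.
Qed.

Definition eqvI (a b : term K) : Prop := exists l, a === Tadd b (hsum l).

Local Notation "a ~= b" := (eqvI a b) (at level 70).

#[global] Instance eqvL_eqvI : subrelation (eqvL r s phi) eqvI.
Proof. by move=> a b ab; exists [::]; setoid_rewrite eqv_addr0. Qed.

Lemma eqvI_sym a b : a ~= b -> b ~= a.
Proof.
case=> l ab; exists [seq (Tmul (Tc (-1)) p.1, p.2) | p <- l].
setoid_rewrite <- hsum_mull; transitivity (Tadd b (Tc 0)); first by symmetry; exact: eqv_addr0.
setoid_rewrite <- (eqv_addN _ _ _ (hsum l)); rewrite /tsub.
by setoid_rewrite eqv_addA; setoid_rewrite <- ab; reflexivity.
Qed.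

Lemma eqvI_trans a b c : a ~= b -> b ~= c -> a ~= c.
Proof.
case=> l1 ab [l2 bc]; exists (l2 ++ l1).
setoid_rewrite hsum_cat; setoid_rewrite ab; setoid_rewrite bc.
by setoid_rewrite eqv_addA; reflexivity.
Qed.

#[global] Instance eqvI_Equivalence : Equivalence eqvI.
Proof.
by split; [move=> a; apply: eqvL_eqvI; reflexivity | exact: eqvI_sym | exact: eqvI_trans].
Qed.

#[global] Instance Tadd_eqvI : Proper (eqvI ==> eqvI ==> eqvI) (@Tadd K).
Proof.
move=> a a' [l1 aa'] b b' [l2 bb']; exists (l1 ++ l2).
setoid_rewrite hsum_cat; setoid_rewrite aa'; setoid_rewrite bb'.
exact: eqv_addACA.
Qed.

#[global] Instance Tmul_eqvI : Proper (eqvI ==> eqvI ==> eqvI) (@Tmul K).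
Proof.
move=> a a' [l1 aa'] b b' [l2 bb']; transitivity (Tmul a' b).
  exists [seq (p.1, Tmul p.2 b) | p <- l1].
  by setoid_rewrite <- hsum_mulr; setoid_rewrite aa'; exact: eqv_mulDl.
exists [seq (Tmul a' p.1, p.2) | p <- l2].
by setoid_rewrite <- hsum_mull; setoid_rewrite bb'; exact: eqv_mulDr.
Qed.

Lemma eqvI_in_ideal a : a ~= Tc 0 -> in_ideal_h r s phi a.
Proof. by case=> l a0; exists l; setoid_rewrite a0; exact: eqv_add0. Qed.

Lemma Th_eqvI : (Th : term K) ~= Tc 0.
Proof.
exists [:: (Tc 1, Tc 1)] => /=.
setoid_rewrite eqv_add0; setoid_rewrite eqv_addr0.
by setoid_rewrite eqv_mul1l; setoid_rewrite eqv_mul1r; reflexivity.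
Qed.

Lemma tpoly_eqvI (p : {poly K}) : tpoly p ~= Tc p`_0.
Proof.
have tail k n : foldr (fun i acc => Tadd (Tmul (Tc p`_i) (tpow Th i)) acc)
    (Tc 0) (iota k.+1 n) ~= Tc 0.
  elim: n k => [|n IH] k /=; first reflexivity.
  rewrite /tpow /=; setoid_rewrite IH; setoid_rewrite Th_eqvI at 1.
  by setoid_rewrite eqv_mul0l; setoid_rewrite eqv_mul0r; setoid_rewrite eqv_addr0; reflexivity.
rewrite /tpoly; case: (size p) (@nth_default _ 0 p 0) => [p0|n _] /=.
  by rewrite p0 //; reflexivity.
setoid_rewrite tail; setoid_rewrite eqv_addr0.
by setoid_rewrite eqv_mul1r; reflexivity.
Qed.

Lemma eqv_subrK a b : Tadd (tsub a b) b === a.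
Proof.
rewrite /tsub; setoid_rewrite <- eqv_addA.
setoid_rewrite (eqv_addC _ _ _ (Tmul (Tc (-1)) b)).
by setoid_rewrite (eqv_addN _ _ _ b); exact: eqv_addr0.
Qed.

Lemma eqvI_sub0 a b : tsub a b ~= Tc 0 -> a ~= b.
Proof.
move=> ab0; setoid_rewrite <- (eqv_subrK a b); setoid_rewrite ab0.
by setoid_rewrite eqv_add0; reflexivity.
Qed.

Lemma Tdu_eqvI : Tmul Td Tu ~= Tadd (Tmul (Tc s) (Tmul Tu Td)) (Tc phi`_0).
Proof.
have rel : tsub (Tmul Td Tu) (Tmul (Tc s) (Tmul Tu Td)) ~= Tc phi`_0.
  apply: eqvI_sub0; rewrite {1}/tsub; setoid_rewrite <- (tpoly_eqvI phi).
  apply: eqvL_eqvI; exact: eqv_rel_du.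
setoid_rewrite <- (eqv_subrK (Tmul Td Tu) (Tmul (Tc s) (Tmul Tu Td))).
by setoid_rewrite rel; apply: eqvL_eqvI; exact: eqv_addC.
Qed.

End IdealCongruence.

Section NormalForm.
Variable K : numClosedFieldType.
Variables (r s : K) (phi : {poly K}).

Local Notation "a === b" := (eqvL r s phi a b) (at level 70).
Local Notation "a ~= b" := (eqvI r s phi a b) (at level 70).

Definition tsum (ts : seq (term K)) : term K := foldr (@Tadd K) (Tc 0) ts.

Lemma tsum_cat ts1 ts2 : tsum (ts1 ++ ts2) === Tadd (tsum ts1) (tsum ts2).
Proof.
elim: ts1 => [|t ts1 IH] /=; first by setoid_rewrite eqv_add0; reflexivity.
by setoid_rewrite IH; exact: eqv_addA.
Qed.

Lemma tsum_mull a ts : Tmul a (tsum ts) === tsum (map (Tmul a) ts).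
Proof.
elim: ts => [|t ts IH] /=; first exact: eqv_mul0r.
by setoid_rewrite eqv_mulDr; setoid_rewrite IH; reflexivity.
Qed.

Lemma tsum_split (X : Type) (f g : X -> term K) (l : seq X) :
  tsum [seq Tadd (f x) (g x) | x <- l] === Tadd (tsum (map f l)) (tsum (map g l)).
Proof.
elim: l => [|x l IH] /=; first by setoid_rewrite eqv_add0; reflexivity.
by setoid_rewrite IH; exact: eqv_addACA.
Qed.

Lemma eq_tsum (X : eqType) (f g : X -> term K) (l : seq X) :
  (forall x, x \in l -> f x ~= g x) -> tsum (map f l) ~= tsum (map g l).
Proof.
elim: l => [|x l IH] fg /=; first reflexivity.
setoid_rewrite (fg x (mem_head _ _)); setoid_rewrite IH; first reflexivity.
by move=> y yl; apply: fg; rewrite in_cons yl orbT.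
Qed.

Lemma tsum_eq0 (X : eqType) (f : X -> term K) (l : seq X) :
  (forall x, x \in l -> f x ~= Tc 0) -> tsum (map f l) ~= Tc 0.
Proof.
move=> f0; transitivity (tsum [seq Tc 0 | _ <- l]); first exact: eq_tsum.
elim: l {f0} => [|x l IH] /=; first reflexivity.
by setoid_rewrite IH; apply: eqvL_eqvI; exact: eqv_add0.
Qed.

Definition monomial (x : K * (nat * nat)) : term K :=
  Tmul (Tc x.1) (Tmul (tpow Tu x.2.1) (tpow Td x.2.2)).

Definition in_normal_form (t : term K) : Prop :=
  exists l, t ~= tsum (map monomial l).

Lemma normal_eqvI a b : a ~= b -> in_normal_form b -> in_normal_form a.
Proof. by move=> ab [l bl]; exists l; setoid_rewrite ab. Qed.

#[local] Instance in_normal_form_eqvI : Proper (eqvI r s phi ==> iff) in_normal_form.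
Proof. by move=> a b ab; split; apply: normal_eqvI; first symmetry. Qed.

Lemma normal_add a b :
  in_normal_form a -> in_normal_form b -> in_normal_form (Tadd a b).
Proof.
case=> l1 a1 [l2 b2]; exists (l1 ++ l2); rewrite map_cat.
by setoid_rewrite tsum_cat; setoid_rewrite a1; setoid_rewrite b2; reflexivity.
Qed.

Lemma normal_tsum (X : Type) (f : X -> term K) (l : seq X) :
  (forall x, in_normal_form (f x)) -> in_normal_form (tsum (map f l)).
Proof.
move=> fN; elim: l => [|x l IH] /=; first by exists [::]; reflexivity.
exact: normal_add.
Qed.

Lemma normal_mull_monomial a (f : K * (nat * nat) -> K * (nat * nat)) b :
  (forall x, Tmul a (monomial x) ~= monomial (f x)) ->
  in_normal_form b -> in_normal_form (Tmul a b).
Proof.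
move=> af [l bl]; exists (map f l); setoid_rewrite bl.
setoid_rewrite tsum_mull; rewrite -map_comp -(map_comp monomial f).
by apply: eq_tsum => x _; exact: af.
Qed.

Lemma normal_Tc c : in_normal_form (Tc c).
Proof.
exists [:: (c, (0, 0)%N)]; rewrite /monomial /=.
setoid_rewrite eqv_addr0; setoid_rewrite eqv_mul1r.
by setoid_rewrite eqv_mul1r; reflexivity.
Qed.

Lemma normal_scale c b : in_normal_form b -> in_normal_form (Tmul (Tc c) b).
Proof.
apply: (normal_mull_monomial (f := fun x => (c * x.1, x.2))) => x.
apply: eqvL_eqvI; rewrite /monomial /=; setoid_rewrite (eqv_mulA _ _ _ (Tc c)).
by setoid_rewrite eqv_cmul; reflexivity.
Qed.

Lemma normal_Tu b : in_normal_form b -> in_normal_form (Tmul Tu b).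
Proof.
apply: (normal_mull_monomial (f := fun x => (x.1, (x.2.1.+1, x.2.2)))) => x.
apply: eqvL_eqvI; rewrite /monomial /=; setoid_rewrite eqv_mulcA.
by setoid_rewrite (eqv_mulA _ _ _ Tu); reflexivity.
Qed.

Lemma normal_ud i j : in_normal_form (Tmul (tpow Tu i) (tpow Td j)).
Proof.
exists [:: (1, (i, j))]; rewrite /monomial /=.
by setoid_rewrite eqv_addr0; setoid_rewrite eqv_mul1l; reflexivity.
Qed.

Lemma normal_Td_ud i j : in_normal_form (Tmul Td (Tmul (tpow Tu i) (tpow Td j))).
Proof.
elim: i j => [|i IH] j.
  apply: (normal_eqvI (b := Tmul (tpow Tu 0) (tpow Td j.+1))); last exact: normal_ud.
  by apply: eqvL_eqvI; rewrite /=; setoid_rewrite eqv_mul1l; reflexivity.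
apply: (normal_eqvI (b := Tmul (Tmul Td Tu) (Tmul (tpow Tu i) (tpow Td j)))).
  by apply: eqvL_eqvI; rewrite /=; setoid_rewrite eqv_mulA; setoid_rewrite eqv_mulA; reflexivity.
setoid_rewrite (Tdu_eqvI r s phi); setoid_rewrite eqv_mulDl.
setoid_rewrite <- eqv_mulA; setoid_rewrite <- eqv_mulA.
apply: normal_add; apply: normal_scale; last exact: normal_ud.
exact/normal_Tu/IH.
Qed.

Lemma normal_Td b : in_normal_form b -> in_normal_form (Tmul Td b).
Proof.
case=> l bl; apply: (normal_eqvI (b := tsum (map (Tmul Td \o monomial) l))).
  by setoid_rewrite bl; setoid_rewrite tsum_mull; rewrite map_comp; reflexivity.
apply: normal_tsum => x; rewrite /= /monomial.
by setoid_rewrite eqv_mulcA; apply/normal_scale/normal_Td_ud.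
Qed.

Lemma normal_mul a b : in_normal_form b -> in_normal_form (Tmul a b).
Proof.
elim: a b => [| | |c|a1 IH1 a2 IH2|a1 IH1 a2 IH2] b nb.
- exact: normal_Tu.
- exact: normal_Td.
- apply: (normal_eqvI (b := Tc 0)); last exact: normal_Tc.
  by setoid_rewrite Th_eqvI; apply: eqvL_eqvI; exact: eqv_mul0l.
- exact: normal_scale.
- setoid_rewrite eqv_mulDl; exact: normal_add (IH1 _ nb) (IH2 _ nb).
- setoid_rewrite <- eqv_mulA; exact/IH1/IH2.
Qed.

Lemma normal_form_exists t : in_normal_form t.
Proof.
apply: (normal_eqvI (b := Tmul t (Tc 1))); last exact/normal_mul/normal_Tc.
by apply: eqvL_eqvI; symmetry; exact: eqv_mul1r.
Qed.

Definition coef (l : seq (K * (nat * nat))) (p : nat * nat) : K :=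
  \sum_(x <- l | x.2 == p) x.1.

Lemma tsum_monomial_coef l P : uniq P -> {in l, forall x, x.2 \in P} ->
  tsum (map monomial l) ~= tsum [seq monomial (coef l p, p) | p <- P].
Proof.
move=> Puniq; elim: l => [|x l IH] lP /=.
  by symmetry; apply: tsum_eq0 => p _; rewrite /coef big_nil; exact: eqvL_eqvI (eqv_mul0l _ _ _ _).
have single : tsum [seq monomial (if x.2 == p then x.1 else 0, p) | p <- P] ~= monomial x.
  have: x.2 \in P by apply: lP; exact: mem_head.
  elim: P Puniq {lP IH} => [|q P IHP] //= /andP [qP Puniq].
  rewrite in_cons; case: eqVneq => [xq _ | xq /= xP].
    rewrite -xq in qP *.
    transitivity (Tadd (monomial x) (Tc 0)); last exact: eqvL_eqvI (eqv_addr0 _ _ _ _).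
    apply: Tadd_eqvI; first reflexivity.
    apply: tsum_eq0 => p pP; have -> : (x.2 == p) = false by apply: contraNF qP => /eqP ->.
    exact: eqvL_eqvI (eqv_mul0l _ _ _ _).
  setoid_rewrite IHP => //; rewrite /monomial /=.
  by apply: eqvL_eqvI; setoid_rewrite eqv_mul0l; exact: eqv_add0.
setoid_rewrite IH; last by move=> y yl; apply: lP; rewrite in_cons yl orbT.
setoid_rewrite <- single; setoid_rewrite <- tsum_split.
apply: eq_tsum => p _; rewrite /coef big_cons; apply: eqvL_eqvI; rewrite /monomial /=.
setoid_rewrite <- eqv_mulDl; setoid_rewrite eqv_cadd.
by case: eqP => _; rewrite ?add0r; reflexivity.
Qed.

End NormalForm.

Section LinearFun.
Variables (K : numClosedFieldType) (M : lmodType K) (f : M -> M).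
Hypothesis f_lin : linear f.

Let fL : {linear M -> M} := HB.pack f (GRing.isLinear.Build K M M *:%R f f_lin).

Lemma lin0 : f 0 = 0.
Proof. exact: (linear0 fL). Qed.

Lemma linD x y : f (x + y) = f x + f y.
Proof. exact: (linearD fL). Qed.

Lemma linZ a x : f (a *: x) = a *: f x.
Proof. exact: (linearZZ fL). Qed.

Lemma lin_sum (I : Type) (l : seq I) (P : pred I) (F : I -> M) :
  f (\sum_(i <- l | P i) F i) = \sum_(i <- l | P i) f (F i).
Proof. exact: (linear_sum fL). Qed.

Lemma iter_linear n : linear (iter n f).
Proof. by elim: n => [|n IH] a x y //=; rewrite IH f_lin. Qed.

End LinearFun.

Section Action.
Variables (K : numClosedFieldType) (M : lmodType K) (U D H : M -> M).
Hypotheses (U_lin : linear U) (D_lin : linear D) (H_lin : linear H).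

Local Notation act := (act U D H).

Lemma act_linear t : linear (act t).
Proof.
elim: t => [| | |c|t1 IH1 t2 IH2|t1 IH1 t2 IH2] a x y /=.
- exact: U_lin.
- exact: D_lin.
- exact: H_lin.
- by rewrite scalerDr !scalerA mulrC.
- by rewrite IH1 IH2 scalerDr addrACA.
- by rewrite IH2 IH1.
Qed.

Lemma act_tpow t n m : act (tpow t n) m = iter n (act t) m.
Proof. by elim: n => [|n IH] /=; rewrite ?scale1r ?IH. Qed.

Lemma act_tsum ts m : act (tsum ts) m = \sum_(t <- ts) act t m.
Proof.
elim: ts => [|t ts IH] /=; first by rewrite big_nil scale0r.
by rewrite big_cons IH.
Qed.

Lemma act_monomial x m : act (monomial x) m = x.1 *: iter x.2.1 U (iter x.2.2 D m).
Proof. by rewrite /= !act_tpow. Qed.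

Variables (r s : K) (phi : {poly K}).
Hypotheses (hu_act : forall m, act (rel_hu r) m = 0)
  (dh_act : forall m, act (rel_dh r) m = 0)
  (du_act : forall m, act (rel_du s phi) m = 0).

Lemma act_eqvL a b : eqvL r s phi a b -> act a =1 act b.
Proof.
elim=> {a b} /=.
- by [].
- by move=> a b _ ab m; rewrite ab.
- by move=> a b c _ ab _ bc m; rewrite ab bc.
- by move=> a a' b b' _ aa' _ bb' m; rewrite aa' bb'.
- by move=> a a' b b' _ aa' _ bb' m; rewrite bb' aa'.
- by move=> a b c m; rewrite addrA.
- by move=> a b m; rewrite addrC.
- by move=> a m; rewrite scale0r add0r.
- by move=> a m; rewrite scaleN1r subrr scale0r.
- by [].
- by move=> a m; rewrite scale1r.
- by move=> a m; rewrite scale1r.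
- by move=> a m; rewrite !scale0r.
- by [].
- by move=> a b c m; rewrite (linD (act_linear a)).
- by move=> x y m; rewrite scalerDl.
- by move=> x y m; rewrite scalerA.
- by move=> x a m; rewrite (linZ (act_linear a)).
- by move=> m; rewrite scale0r; exact: hu_act.
- by move=> m; rewrite scale0r; exact: dh_act.
- by move=> m; rewrite scale0r; exact: du_act.
Qed.

Hypothesis H0 : forall m, H m = 0.

Lemma act_hsum l m : act (hsum l) m = 0.
Proof.
elim: l => [|p l IH] /=; first by rewrite scale0r.
by rewrite IH H0 (lin0 (act_linear _)) addr0.
Qed.

Lemma act_eqvI a b : eqvI r s phi a b -> act a =1 act b.
Proof. by case=> l ab m; rewrite (act_eqvL ab) /= act_hsum addr0. Qed.

Lemma ideal_sub_ann t : in_ideal_h r s phi t -> in_ann U D H t.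
Proof. by case=> l tl m; rewrite (act_eqvL tl); exact: act_hsum. Qed.

End Action.

Section Operators.
Variables (K : numClosedFieldType) (M : lmodType K) (U D : M -> M) (s c : K).
Hypotheses (U_lin : linear U) (D_lin : linear D) (s_neq0 : s != 0).
Hypothesis DU : forall m, D (U m) = s *: U (D m) + (s * c - c) *: m.

Definition Hop (m : M) : M := U (D m) + c *: m.

Lemma Hop_linear : linear Hop.
Proof.
move=> a x y; rewrite /Hop D_lin U_lin !scalerDr !scalerA [c * a]mulrC.
by rewrite addrACA.
Qed.

Lemma Hop_U m : Hop (U m) = s *: U (Hop m).
Proof.
rewrite /Hop DU !(linD U_lin) !(linZ U_lin) scalerDr scalerA -addrA.
by rewrite -scalerDl subrK.
Qed.

Lemma D_Hop m : D (Hop m) = s *: Hop (D m).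
Proof.
rewrite /Hop (linD D_lin) DU (linZ D_lin) scalerDr scalerA -addrA.
by rewrite -scalerDl subrK.
Qed.

Lemma expf_s_neq0 n : s ^+ n != 0.
Proof. exact: expf_neq0. Qed.

Lemma Hop_iterU n m : Hop (iter n U m) = s ^+ n *: iter n U (Hop m).
Proof.
elim: n => [|n IH] /=; first by rewrite scale1r.
by rewrite Hop_U IH (linZ U_lin) scalerA exprS.
Qed.

Lemma iterU_Hop n m : iter n U (Hop m) = (s ^+ n)^-1 *: Hop (iter n U m).
Proof. by rewrite Hop_iterU scalerA mulVf ?expf_s_neq0 // scale1r. Qed.

Lemma iterD_Hop n m : iter n D (Hop m) = s ^+ n *: Hop (iter n D m).
Proof.
elim: n => [|n IH] /=; first by rewrite scale1r.
by rewrite IH (linZ D_lin) D_Hop scalerA exprSr.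
Qed.

Lemma Hop_iterD n m : Hop (iter n D m) = (s ^+ n)^-1 *: iter n D (Hop m).
Proof. by rewrite iterD_Hop scalerA mulVf ?expf_s_neq0 // scale1r. Qed.

Lemma Hop_iterU_eigen v l n :
  Hop v = l *: v -> Hop (iter n U v) = (s ^+ n * l) *: iter n U v.
Proof. by move=> Hv; rewrite Hop_iterU Hv (linZ (iter_linear U_lin n)) scalerA. Qed.

Lemma Hop_iterD_eigen v l n :
  Hop v = l *: v -> Hop (iter n D v) = ((s ^+ n)^-1 * l) *: iter n D v.
Proof. by move=> Hv; rewrite Hop_iterD Hv (linZ (iter_linear D_lin n)) scalerA. Qed.

Definition poly_Hop (p : {poly K}) (m : M) : M :=
  \sum_(i < size p) p`_i *: iter i Hop m.

Lemma poly_HopE (p : {poly K}) m n : (size p <= n)%N ->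
  poly_Hop p m = \sum_(i < n) p`_i *: iter i Hop m.
Proof.
move=> le_p_n; rewrite /poly_Hop (big_ord_widen n (fun i => p`_i *: iter i Hop m) le_p_n).
rewrite big_mkcond; apply: eq_bigr => i _.
by case: ltnP => //= le_p_i; rewrite nth_default // scale0r.
Qed.

Lemma poly_HopD (p q : {poly K}) m : poly_Hop (p + q) m = poly_Hop p m + poly_Hop q m.
Proof.
pose n := maxn (size p) (size q).
rewrite (@poly_HopE _ _ n) ?(leq_trans (size_polyD _ _)) //.
rewrite (@poly_HopE p _ n) ?leq_maxl // (@poly_HopE q _ n) ?leq_maxr //.
by rewrite -big_split; apply: eq_bigr => i _; rewrite coefD scalerDl.
Qed.

Lemma poly_HopZ a (p : {poly K}) m : poly_Hop (a *: p) m = a *: poly_Hop p m.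
Proof.
rewrite (poly_HopE _ (size_scale_leq a p)) scaler_sumr.
by apply: eq_bigr => i _; rewrite coefZ scalerA.
Qed.

Lemma poly_HopB (p q : {poly K}) m : poly_Hop (p - q) m = poly_Hop p m - poly_Hop q m.
Proof. by rewrite poly_HopD -(scaleN1r q) poly_HopZ scaleN1r. Qed.

Lemma poly_HopC a m : poly_Hop a%:P m = a *: m.
Proof.
by rewrite (poly_HopE _ (size_polyC_leq1 a)) big_ord_recl big_ord0 addr0 coefC.
Qed.

Lemma poly_HopXM (p : {poly K}) m : poly_Hop ('X * p) m = Hop (poly_Hop p m).
Proof.
have le_Xp : (size ('X * p)%R <= (size p).+1)%N.
  by rewrite mulrC (leq_trans (size_polyMleq _ _)) // size_polyX addn2.
rewrite (poly_HopE _ le_Xp) big_ord_recl coefXM scale0r add0r.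
rewrite /poly_Hop (lin_sum Hop_linear); apply: eq_bigr => i _.
by rewrite coefXM /= (linZ Hop_linear).
Qed.

Lemma poly_Hop_sum (I : Type) (l : seq I) (P : pred I) (F : I -> {poly K}) m :
  poly_Hop (\sum_(i <- l | P i) F i) m = \sum_(i <- l | P i) poly_Hop (F i) m.
Proof.
elim/big_rec2: _ => [|i p x _ <-]; last exact: poly_HopD.
by rewrite /poly_Hop size_poly0 big_ord0.
Qed.

Lemma poly_Hop_eigen (p : {poly K}) v l : Hop v = l *: v -> poly_Hop p v = p.[l] *: v.
Proof.
move=> Hv; have iterHv n : iter n Hop v = l ^+ n *: v.
  by elim: n => [|n IH] /=; rewrite ?scale1r // IH (linZ Hop_linear) Hv scalerA exprSr.
rewrite /poly_Hop horner_coef scaler_suml; apply: eq_bigr => i _.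
by rewrite iterHv scalerA.
Qed.

(* From u^(n+1) d^(n+1) = u^n (Hop - c) d^n and u^n Hop = s^-n Hop u^n. *)
Fixpoint diag_poly (n : nat) : {poly K} :=
  if n is n'.+1 then (s ^+ n')^-1 *: ('X * diag_poly n') - c *: diag_poly n' else 1.

Lemma poly_Hop_diag n m : poly_Hop (diag_poly n) m = iter n U (iter n D m).
Proof.
elim: n m => [|n IH] m; first by rewrite poly_HopC scale1r.
rewrite poly_HopB !poly_HopZ poly_HopXM IH iterSr iterS -iterU_Hop /Hop.
by rewrite (linD (iter_linear U_lin n)) (linZ (iter_linear U_lin n)) addrK.
Qed.

Lemma size_diag_poly n : size (diag_poly n) = n.+1.
Proof.
elim: n => [|n IH] /=; first by rewrite size_poly1.
have sizeXg : size ((s ^+ n)^-1 *: ('X * diag_poly n)) = n.+2.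
  by rewrite size_scale ?invr_eq0 ?expf_s_neq0 // mulrC size_mulX -?size_poly_eq0 IH.
by rewrite size_polyDl sizeXg // size_polyN (leq_ltn_trans (size_scale_leq _ _)) ?IH.
Qed.


Lemma diag_poly_lead n : (diag_poly n)`_n != 0.
Proof.
rewrite -[n in _`_n]/(n.+1.-1) -(size_diag_poly n) -lead_coefE lead_coef_eq0.
by rewrite -size_poly_eq0 size_diag_poly.
Qed.

Lemma diag_poly_free N k (a : nat -> K) :
  \sum_(j < N) a j *: diag_poly (j + k) = 0 -> forall j, (j < N)%N -> a j = 0.
Proof.
elim: N => [|N IH] //; rewrite big_ord_recr /= => sum0.
have aN : a N = 0.
  move/(congr1 (fun p : {poly K} => p`_(N + k))): sum0.
  rewrite coefD coefZ coef_sum coef0 big1 ?add0r => [/eqP|i _].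
    by rewrite mulf_eq0 (negbTE (diag_poly_lead _)) orbF => /eqP.
  by rewrite coefZ nth_default ?mulr0 // size_diag_poly ltn_add2r.
move: sum0; rewrite aN scale0r addr0 => /IH a0 j; rewrite ltnS leq_eqVlt.
by case/orP => [/eqP -> | /a0].
Qed.

Hypothesis s_not_root : forall n, (0 < n)%N -> s ^+ n != 1.

Lemma expf_s_inj : injective (fun n => s ^+ n).
Proof.
suff le_inj a b : (a <= b)%N -> s ^+ a = s ^+ b -> a = b.
  by move=> a b; case: (leqP a b) => [|/ltnW] ab sab; [|symmetry]; apply: le_inj.
move=> le_ab; rewrite -(subnKC le_ab) exprD -[X in X = _]mulr1.
move=> /(mulfI (expf_s_neq0 a)) /esym sba; suff -> : (b - a = 0)%N by rewrite addn0.
by case: (b - a)%N sba => // k sk; have := s_not_root (n := k.+1) isT; rewrite sk eqxx.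
Qed.

Lemma expf_s_ratio_eq i j i' j' :
  s ^+ i / s ^+ j = s ^+ i' / s ^+ j' -> (i + j' = j + i')%N.
Proof.
move/eqP; rewrite eqr_div ?expf_s_neq0 // => /eqP e.
by apply: expf_s_inj; rewrite /= !exprD e mulrC.
Qed.

Lemma iter_last_nonzero (f : M -> M) v a : v != 0 -> iter a f v = 0 ->
  exists b, iter b f v != 0 /\ f (iter b f v) = 0.
Proof.
move=> v0; elim: a => [|a IH] /=; first by move=> v0'; rewrite v0' eqxx in v0.
by case: (eqVneq (iter a f v) 0) => [/IH | fav0 ffav0]; last exists a.
Qed.

Lemma poly_nonroot (P : {poly K}) (f : nat -> K) : P != 0 -> injective f ->
  exists a, ~~ root P (f a).
Proof.
move=> P0 f_inj; apply: NNPP => all_root.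
have all_root_seq : all (root P) (mkseq f (size P)).
  apply/allP => _ /mapP [a _ ->]; apply: NNPP => /negP Pfa.
  by apply: all_root; exists a.
have := max_poly_roots P0 all_root_seq (mkseq_uniq _ f_inj).
by rewrite size_mkseq ltnn.
Qed.

Hypothesis Hop_inj : forall m, Hop m = 0 -> m = 0.
Hypothesis M_neq0 : exists m : M, m != 0.

Lemma Hop_eigenvector (P : {poly K}) : P != 0 -> (forall m, poly_Hop P m = 0) ->
  exists v l, v != 0 /\ Hop v = l *: v.
Proof.
have [n] := ubnP (size P); elim: n P => // n IH P; rewrite ltnS => size_P P0 P_id.
have [/size_poly1P [a a0 Pa] | size_P1] := boolP (size P == 1%N).
  case: M_neq0 => m m0; move: (P_id m); rewrite Pa poly_HopC => /eqP.
  by rewrite scaler_eq0 (negbTE a0) (negbTE m0).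
case/closed_rootP: size_P1 => x /factor_theorem [Q PQ].
have Q0 : Q != 0 by apply: contraNneq P0 => Q0; rewrite PQ Q0 mul0r.
have P_Q m : poly_Hop P m = Hop (poly_Hop Q m) - x *: poly_Hop Q m.
  by rewrite PQ mulrBr [Q * _]mulrC [Q * _]mulrC mul_polyC poly_HopB poly_HopXM poly_HopZ.
have [Q_id | /not_all_ex_not [m Qm]] := classic (forall m, poly_Hop Q m = 0).
  apply: (IH Q) => //; move: size_P.
  by rewrite PQ size_mul ?polyXsubC_eq0 // size_XsubC addn2.
exists (poly_Hop Q m), x; split; first exact/eqP.
by apply/eqP; rewrite -subr_eq0 -P_Q P_id.
Qed.

Lemma eigenvector_eq0 (P : {poly K}) v l : (forall m, poly_Hop P m = 0) ->
  Hop v = l *: v -> ~~ root P l -> v = 0.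
Proof.
move=> P_id Hv Pl; apply/eqP; move: (P_id v).
by rewrite (poly_Hop_eigen _ Hv) => /eqP; rewrite scaler_eq0 -rootE (negbTE Pl).
Qed.

Lemma eigenvalue_kerU v l : v != 0 -> U v = 0 -> Hop v = l *: v -> s * l = c.
Proof.
move=> v0 Uv Hv; move: (DU v); rewrite Uv (lin0 D_lin).
have -> : U (D v) = (l - c) *: v by rewrite scalerBl -Hv /Hop addrK.
rewrite scalerA -scalerDl => /esym/eqP; rewrite scaler_eq0 (negbTE v0) orbF.
by rewrite mulrBr addrA subrK subr_eq0 => /eqP.
Qed.

Lemma eigenvalue_kerD v l : v != 0 -> D v = 0 -> Hop v = l *: v -> l = c.
Proof.
move=> v0 Dv; rewrite /Hop Dv (lin0 U_lin) add0r => /eqP.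
rewrite eq_sym -subr_eq0 -scalerBl scaler_eq0 (negbTE v0) orbF subr_eq0.
by move/eqP.
Qed.

Lemma no_poly_identity (P : {poly K}) : P != 0 -> ~ (forall m, poly_Hop P m = 0).
Proof.
move=> P0 P_id; have [v [l [v0 Hv]]] := Hop_eigenvector P0 P_id.
have l0 : l != 0.
  by apply: contraNneq v0 => l0; apply/eqP/Hop_inj; rewrite Hv l0 scale0r.
have [a Pa] : exists a, ~~ root P (s ^+ a * l).
  by apply: poly_nonroot => // x y /(mulIf l0) /expf_s_inj.
have [a' Pa'] : exists a, ~~ root P ((s ^+ a)^-1 * l).
  by apply: poly_nonroot => // x y /(mulIf l0) /invr_inj /expf_s_inj.
have [b [Ubv0 UUbv0]] :=
  iter_last_nonzero v0 (eigenvector_eq0 P_id (Hop_iterU_eigen a Hv) Pa).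
have [b' [Db'v0 DDb'v0]] :=
  iter_last_nonzero v0 (eigenvector_eq0 P_id (Hop_iterD_eigen a' Hv) Pa').
have e1 := eigenvalue_kerU Ubv0 UUbv0 (Hop_iterU_eigen b Hv).
have e2 := eigenvalue_kerD Db'v0 DDb'v0 (Hop_iterD_eigen b' Hv).
have /(mulIf l0) e : s ^+ b.+1 * l = (s ^+ b')^-1 * l by rewrite exprS -mulrA e1 e2.
have := s_not_root (n := b.+1 + b') isT.
by rewrite exprD e mulVf ?expf_s_neq0 ?eqxx.
Qed.

Definition ud_comb (N : nat) (f : nat -> nat -> K) (m : M) : M :=
  \sum_(i < N) \sum_(j < N) f i j *: iter i U (iter j D m).

Lemma sum_ord_eq1 N p (F : nat -> M) :
  (forall i, (i < N)%N -> i != p -> F i = 0) ->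
  \sum_(i < N) F i = if (p < N)%N then F p else 0.
Proof.
move=> F0; case: ifP => pN; last first.
  by rewrite big1 // => i _; apply: F0 => //; apply: contraFneq pN => <-.
by rewrite (bigD1 (Ordinal pN)) //= big1 ?addr0 // => i ip; apply: F0.
Qed.

Lemma diag_comb_eq0 N k (a : nat -> K) :
  (forall m, \sum_(j < N) a j *: iter (j + k) U (iter (j + k) D m) = 0) ->
  forall j, (j < N)%N -> a j = 0.
Proof.
move=> comb0; apply: diag_poly_free; apply/eqP; apply: contraT => P0; exfalso.
apply: no_poly_identity P0 _ => m; rewrite poly_Hop_sum -[RHS](comb0 m).
by apply: eq_bigr => j _; rewrite poly_HopZ poly_Hop_diag.
Qed.

Lemma ud_comb_shiftU N f k : (forall m, ud_comb N f m = 0) ->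
  (forall i j, (i < N)%N -> (j < N)%N -> i != (j + k)%N -> f i j = 0) ->
  forall j, (j + k < N)%N -> f (j + k)%N j = 0.
Proof.
move=> f0 supp j jkN; pose a j' := if (j' + k < N)%N then f (j' + k)%N j' else 0.
have jN : (j < N)%N by apply: leq_ltn_trans jkN; exact: leq_addr.
have := @diag_comb_eq0 N k a _ j jN; rewrite /a jkN; apply=> m.
transitivity (ud_comb N f (iter k D m)); last exact: f0.
rewrite /ud_comb exchange_big /=; apply: eq_bigr => j' _.
rewrite (@sum_ord_eq1 N (j' + k)%N (fun i => f i j' *: iter i U (iter j' D (iter k D m)))).
  by rewrite /a -iterD; case: ifP; rewrite ?scale0r.
by move=> i iN ijk; rewrite supp ?scale0r.
Qed.

Lemma ud_comb_shiftD N f k : (forall m, ud_comb N f m = 0) ->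
  (forall i j, (i < N)%N -> (j < N)%N -> j != (i + k)%N -> f i j = 0) ->
  forall i, (i + k < N)%N -> f i (i + k)%N = 0.
Proof.
move=> f0 supp i ikN; pose a i' := if (i' + k < N)%N then f i' (i' + k)%N else 0.
have iN : (i < N)%N by apply: leq_ltn_trans ikN; exact: leq_addr.
have := @diag_comb_eq0 N k a _ i iN; rewrite /a ikN; apply=> m.
have Uk_lin := iter_linear U_lin k.
transitivity (iter k U (ud_comb N f m)); last by rewrite f0 (lin0 Uk_lin).
rewrite /ud_comb (lin_sum Uk_lin); apply: eq_bigr => i' _.
rewrite (@sum_ord_eq1 N (i' + k)%N (fun j => f i' j *: iter i' U (iter j D m))).
  by rewrite /a; case: ifP; rewrite ?scale0r ?(lin0 Uk_lin) // (linZ Uk_lin) -iterD addnC.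
by move=> j jN jik; rewrite supp ?scale0r.
Qed.

Lemma ud_comb_class N f i0 j0 : (forall m, ud_comb N f m = 0) ->
  (forall i j, (i < N)%N -> (j < N)%N -> (i + j0 != j + i0)%N -> f i j = 0) ->
  (i0 < N)%N -> (j0 < N)%N -> f i0 j0 = 0.
Proof.
move=> f0 supp i0N j0N; case: (leqP j0 i0) => [le_j0i0 | /ltnW le_i0j0].
  rewrite -(subnKC le_j0i0); apply: (ud_comb_shiftU f0); last by rewrite subnKC.
  move=> i j iN jN ne; apply: supp => //; apply: contra ne => /eqP ij.
  by rewrite -(eqn_add2r j0) -addnA subnK // ij.
rewrite -(subnKC le_i0j0); apply: (ud_comb_shiftD f0); last by rewrite subnKC.
move=> i j iN jN ne; apply: supp => //; apply: contra ne => /eqP ij.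
by rewrite -(eqn_add2r i0) -addnA subnK // -ij addnC.
Qed.

Lemma ud_comb_sub N f (w : nat -> nat -> K) x m :
  ud_comb N (fun i j => f i j * (w i j - x)) m =
  ud_comb N (fun i j => f i j * w i j) m - x *: ud_comb N f m.
Proof.
rewrite /ud_comb scaler_sumr -sumrB; apply: eq_bigr => i _.
rewrite scaler_sumr -sumrB; apply: eq_bigr => j _.
by rewrite mulrBr scalerBl scalerA [x * _]mulrC.
Qed.

Lemma Hop_ud_comb N f m :
  Hop (ud_comb N f m) = ud_comb N (fun i j => f i j * (s ^+ i / s ^+ j)) (Hop m).
Proof.
rewrite /ud_comb (lin_sum Hop_linear); apply: eq_bigr => i _.
rewrite (lin_sum Hop_linear); apply: eq_bigr => j _.
rewrite (linZ Hop_linear) Hop_iterU Hop_iterD (linZ (iter_linear U_lin i)).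
by rewrite !scalerA mulrA.
Qed.

Hypothesis Hop_surj : forall m, exists m', Hop m' = m.

Definition ud_support N (f : nat -> nat -> K) : {set 'I_N * 'I_N} :=
  [set p : 'I_N * 'I_N | f p.1 p.2 != 0].

(* Multiplying the coefficients by s^(i-j) - s^(i0-j0) preserves the relation
   (Hop_ud_comb) and kills the class of (i0, j0); induction on the support then
   leaves f supported on that single class. *)
Lemma ud_comb_free N f : (forall m, ud_comb N f m = 0) ->
  forall i j, (i < N)%N -> (j < N)%N -> f i j = 0.
Proof.
have [n] := ubnP #|ud_support N f|; elim: n f => // n IH f; rewrite ltnS.
move=> supp_n f0; suff supp0 : ud_support N f = set0.
  move=> i j iN jN; apply/eqP; apply: contraT => fij.
  have : (Ordinal iN, Ordinal jN) \in ud_support N f by rewrite inE.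
  by rewrite supp0 inE.
apply/eqP/set0Pn => -[[i0 j0]]; rewrite inE /= => f00.
pose w i j := s ^+ i / s ^+ j.
pose g i j := f i j * (w i j - w i0 j0).
have g0 m : ud_comb N g m = 0.
  have [m' <-] := Hop_surj m.
  by rewrite ud_comb_sub -Hop_ud_comb !f0 (lin0 Hop_linear) scaler0 subr0.
have lt_supp : (#|ud_support N g| < #|ud_support N f|)%N.
  apply: proper_card; apply/properP; split.
    by apply/subsetP => -[i j]; rewrite !inE /g; apply: contraNneq => ->; rewrite mul0r.
  by exists (i0, j0); rewrite !inE /g ?subrr ?mulr0 ?eqxx.
have g_eq0 := IH g (leq_trans lt_supp supp_n) g0.
move/eqP: f00; apply; apply: ud_comb_class f0 _ (ltn_ord i0) (ltn_ord j0).
move=> i j iN jN off_class; move/eqP: (g_eq0 i j iN jN).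
rewrite mulf_eq0 subr_eq0 => /orP [/eqP // | /eqP /expf_s_ratio_eq ij].
by rewrite ij eqxx in off_class.
Qed.

End Operators.

Lemma conformal_coef0 (K : numClosedFieldType) (r s : K) (phi psi : {poly K}) :
  conformal_poly r s phi psi -> phi`_0 = s * psi`_0 - psi`_0.
Proof.
rewrite /conformal_poly => <-.
by rewrite -horner_coef0 horner_comp hornerZ hornerX mulr0 horner_coef0 coefB coefZ.
Qed.

Section LModule.
Variables (K : numClosedFieldType) (r s : K) (phi : {poly K}).
Variables (M : lmodType K) (U D H : M -> M).
Hypothesis Lmod : is_Lmodule U D H r s phi.
Hypothesis H0 : forall m, H m = 0.

Let U_lin : linear U. Proof. by case: Lmod => [[]]. Qed.
Let D_lin : linear D. Proof. by case: Lmod => [[_ []]]. Qed.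
Let H_lin : linear H. Proof. by case: Lmod => [[_ []]]. Qed.

Let act_eqvI_M a b : eqvI r s phi a b -> act U D H a =1 act U D H b.
Proof. by case: Lmod => _ hu dh du; exact: act_eqvI. Qed.

Variable psi : {poly K}.
Hypothesis hconf : conformal_poly r s phi psi.

Lemma DU_conformal m : D (U m) = s *: U (D m) + (s * psi`_0 - psi`_0) *: m.
Proof. by rewrite -(conformal_coef0 hconf); exact: (act_eqvI_M (Tdu_eqvI r s phi) m). Qed.

Lemma Hterm_act m : act U D H (Hterm psi) m = Hop U D psi`_0 m.
Proof. by rewrite /= (act_eqvI_M (tpoly_eqvI r s phi psi) m). Qed.

Lemma Hop_ker_submodule : s != 0 -> is_submodule U D H (fun m => Hop U D psi`_0 m = 0).
Proof.
move=> s0; have Hop_lin := Hop_linear psi`_0 U_lin D_lin.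
split; first exact: lin0 Hop_lin.
- split=> [m n Hm Hn | a m Hm]; first by rewrite (linD Hop_lin) Hm Hn addr0.
  by rewrite (linZ Hop_lin) Hm scaler0.
- by move=> m Hm; rewrite (Hop_U U_lin DU_conformal) Hm (lin0 U_lin) scaler0.
- move=> m Hm; move: (D_Hop D_lin DU_conformal m); rewrite Hm (lin0 D_lin).
  by move/esym/eqP; rewrite scaler_eq0 (negbTE s0) => /eqP.
- by move=> m _; rewrite H0; exact: lin0 Hop_lin.
Qed.

Definition exponent_bound (l : seq (K * (nat * nat))) : nat :=
  (\max_(x <- l) maxn x.2.1 x.2.2).+1.

Lemma ann_sub_ideal t :
  (forall N f, (forall m, ud_comb U D N f m = 0) ->
    forall i j, (i < N)%N -> (j < N)%N -> f i j = 0) ->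
  in_ann U D H t -> in_ideal_h r s phi t.
Proof.
move=> ud_free t_ann; have [l tl] := normal_form_exists r s phi t.
pose N := exponent_bound l.
pose P := [seq (i, j) | i <- iota 0 N, j <- iota 0 N].
have P_uniq : uniq P by apply: allpairs_uniq => //; [exact: iota_uniq | exact: iota_uniq | move=> [? ?] [? ?]].
have lP : {in l, forall x, x.2 \in P}.
  move=> x xl; have : (maxn x.2.1 x.2.2 < N)%N by rewrite ltnS (leq_bigmax_seq _ xl).
  rewrite gtn_max => /andP [iN jN]; apply/allpairsP; exists x.2.
  by rewrite !mem_iota /= !add0n iN jN -surjective_pairing.
have tP := tsum_monomial_coef r s phi P_uniq lP.
have coef0 : forall i j, (i < N)%N -> (j < N)%N -> coef l (i, j) = 0.
  apply: ud_free => m; rewrite -(t_ann m) (act_eqvI_M tl m) (act_eqvI_M tP m).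
  have iotaN : iota 0 N = index_iota 0 N by rewrite /index_iota subn0.
  rewrite act_tsum big_map /ud_comb big_allpairs iotaN big_mkord.
  apply: eq_bigr => i _; rewrite big_mkord.
  by apply: eq_bigr => j _; rewrite act_monomial.
apply: eqvI_in_ideal; setoid_rewrite tl; setoid_rewrite tP.
apply: tsum_eq0 => p /allpairsP [[i j] [iP jP ->]]; rewrite /monomial /=.
move: iP jP; rewrite !mem_iota /= !add0n => iN jN; rewrite coef0 //.
by apply: eqvL_eqvI; exact: eqv_mul0l.
Qed.

End LModule.

Theorem mainTheorem11 (K : numClosedFieldType) (r s : K) (phi psi : {poly K})
  (hr : r != 0) (hs : s != 0)
  (hconf : conformal_poly r s phi psi)
  (hsroot : forall n : nat, (0 < n)%N -> s ^+ n != 1)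
  (M : lmodType K) (U D H : M -> M)
  (hmod : is_Lmodule U D H r s phi)
  (hsimple : is_simple U D H)
  (hHM : forall m : M, exists m' : M, act U D H (Hterm psi) m' = m)
  (hhM : forall m : M, H m = 0) :
  forall t : term K, in_ann U D H t <-> in_ideal_h r s phi t.
Proof.
have [[U_lin [D_lin H_lin]] hu dh du] := hmod.
have DU := DU_conformal hmod hhM hconf.
have Hop_surj m : exists m', Hop U D psi`_0 m' = m.
  by have [m' <-] := hHM m; exists m'; rewrite (Hterm_act hmod hhM).
have [[m0 m0_neq0] simple] := hsimple.
have Hop_inj m : Hop U D psi`_0 m = 0 -> m = 0.
  case: (simple _ (Hop_ker_submodule hmod hhM hconf hs)) => [ker0 | ker_all].
    exact: ker0.
  by case: m0_neq0; have [m' <-] := Hop_surj m0; exact: ker_all.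
move=> t; split; last exact: (ideal_sub_ann U_lin D_lin H_lin hu dh du hhM).
have M_neq0 : exists m : M, m != 0 by exists m0; apply/eqP.
apply: (ann_sub_ideal hmod hhM) => N f.
exact: (ud_comb_free U_lin D_lin hs DU hsroot Hop_inj M_neq0 Hop_surj).
Qed.
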